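(* Let $G_1$ and $G_2$ be two vertex-disjoint simple connected graphs with $|V(G_1)|=n_1$, $|V(G_2)|=n_2$, $|E(G_1)|=m_1$, $|E(G_2)|=m_2$. Then the edge R-join $G_1\underline{\vee}_R G_2$ satisfies \[ F(G_1\underline{\vee}_R G_2)=8F(G_1)+F(G_2)+3m_1M_1(G_2)+6m_1^{2}m_2+m_1(n_2+2)^3+n_2m_1^{3}. \]
   Context: For a simple graph $G$ and $v\in V(G)$, $d_G(v)$ is the degree of $v$. The first Zagreb index is $M_1(G)=\sum_{v\in V(G)}d_G(v)^2$ and the F-index is $F(G)=\sum_{v\in V(G)}d_G(v)^3$. The graph $R(G)$ is obtained from $G$ by inserting a new vertex into each edge of $G$ and joining each new vertex to the two end vertices of the corresponding edge (so the original edges of $G$ are kept); let $I(G)$ denote the set of these new vertices, so $V(R(G))=V(G)\cup I(G)$. The edge R-join $G_1\underline{\vee}_R G_2$ is the graph obtained from $R(G_1)$ and $G_2$ (taken vertex-disjoint) by joining each vertex of $I(G_1)$ to every vertex of $G_2$ by an edge. *)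

From mathcomp Require Import all_boot.
Set Implicit Arguments. Unset Strict Implicit. Unset Printing Implicit Defensive.

Definition simple_graph (T : finType) (e : rel T) : Prop :=
  symmetric e /\ irreflexive e.

Definition connected_graph (T : finType) (e : rel T) : Prop :=
  forall x y : T, connect e x y.

Definition deg (T : finType) (e : rel T) (v : T) : nat := #|[set w | e v w]|.

Definition M1 (T : finType) (e : rel T) : nat := \sum_(v : T) deg e v ^ 2.
Definition Findex (T : finType) (e : rel T) : nat := \sum_(v : T) deg e v ^ 3.

Definition edges (T : finType) (e : rel T) : {set {set T}} :=
  [set [set x; y] | x in T, y in T & e x y].

(* I(G): one new vertex per edge of G *)
Definition inserted (T : finType) (e : rel T) := {A : {set T} | A \in edges e}.

Definition Rjoin_vertex (T1 T2 : finType) (e1 : rel T1) :=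
  ((T1 + inserted e1) + T2)%type.
Arguments Rjoin_vertex {T1} T2 e1.

(* Adjacency of G1 edge-R-join G2:
   - R(G1): original edges of G1, plus each new vertex adjacent to the two
     ends of its edge;
   - G2: its own edges;
   - every new vertex in I(G1) adjacent to every vertex of G2. *)
Definition Rjoin_adj (T1 T2 : finType) (e1 : rel T1) (e2 : rel T2)
  (u v : Rjoin_vertex T2 e1) : bool :=
  match u, v with
  | inl (inl x), inl (inl y) => e1 x y
  | inl (inl x), inl (inr a) => x \in val a
  | inl (inr a), inl (inl x) => x \in val a
  | inl (inr _), inr _ => true
  | inr _, inl (inr _) => true
  | inr z, inr w => e2 z w
  | _, _ => false
  end.
Arguments Rjoin_adj {T1 T2} e1 e2 u v.

From mathcomp Require Import all_boot.
From mathcomp Require Import zify.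

Set Implicit Arguments.
Unset Strict Implicit.
Unset Printing Implicit Defensive.

(* In the edge R-join an old vertex of G1 doubles its degree (each incident
   edge also contributes its inserted vertex), an inserted vertex sees the two
   ends of its edge and all of G2, and a vertex of G2 gains the m1 inserted
   vertices.  Summing cubes of these degrees, expanding (m1 + d)^3 and using
   the handshake lemma on G2 gives the formula. *)

Lemma card_set_sum (T : finType) (P : pred T) :
  #|[set w | P w]| = \sum_w (P w : nat).
Proof.
rewrite -sum1dep_card big_mkcond /=.
by apply: eq_bigr => w _; case: (P w).
Qed.

Lemma expn3D (m d : nat) :
  (m + d) ^ 3 = d ^ 3 + 3 * m * d ^ 2 + 3 * m ^ 2 * d + m ^ 3.
Proof. rewrite !expnS !expn0; lia. Qed.

Section SimpleGraphEdges.

Variables (T : finType) (e : rel T).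
Hypothesis sg : simple_graph e.

Lemma in_edgesP (A : {set T}) :
  reflect (exists x y, e x y /\ A = [set x; y]) (A \in edges e).
Proof.
apply: (iffP idP).
  by case/imset2P => x y _; rewrite inE => exy ->; exists x, y.
by case=> x [y [exy ->]]; apply: imset2_f; rewrite ?inE.
Qed.

Lemma card_edge (A : {set T}) : A \in edges e -> #|A| = 2.
Proof.
case: sg => _ irr /in_edgesP [x [y [exy ->]]]; rewrite cards2.
by case: eqP exy => // ->; rewrite irr.
Qed.

Lemma edges_at (v : T) :
  [set A in edges e | v \in A] = [set [set v; y] | y in [set w | e v w]].
Proof.
case: sg => sym _; apply/setP => A; rewrite !inE; apply/andP/imsetP.
  case=> /in_edgesP [x [y [exy ->]]] /set2P [] ->.
    by exists y; rewrite ?inE.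
  by exists x; rewrite ?inE 1?sym // setUC.
case=> y; rewrite inE => evy ->; split; last exact: set21.
by apply/in_edgesP; exists v, y.
Qed.

Lemma sum_edges_mem (v : T) : \sum_(A in edges e) (v \in A : nat) = deg e v.
Proof.
case: sg => _ irr.
rewrite -big_mkcondr sum1dep_card /deg edges_at.
apply: card_in_imset => y y'; rewrite !inE => evy _ eq_vy.
have /set2P [vy|//] : y \in [set v; y'] by rewrite -eq_vy set22.
by move: evy; rewrite vy irr.
Qed.

Lemma handshake : \sum_v deg e v = 2 * #|edges e|.
Proof.
under eq_bigr => v _ do rewrite -sum_edges_mem.
rewrite exchange_big /= mulnC -sum_nat_const.
apply: eq_bigr => A /card_edge <-.
rewrite -sum1_card [RHS]big_mkcond /=.
by apply: eq_bigr => z _; case: (z \in A).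
Qed.

End SimpleGraphEdges.

Lemma sum_inserted (T : finType) (e : rel T) (F : {set T} -> nat) :
  \sum_(a : inserted e) F (val a) = \sum_(A in edges e) F A.
Proof.
rewrite (reindex_omap (val : inserted e -> {set T}) insub); last first.
  by move=> i iA; case: insubP => [u _ <- //|]; rewrite iA.
apply: eq_bigl => -[i iA] /=; rewrite iA /=.
case: insubP => [u _ val_u|]; last by rewrite iA.
by apply/esym/eqP; congr Some; apply: val_inj.
Qed.

Lemma card_inserted (T : finType) (e : rel T) : #|{: inserted e}| = #|edges e|.
Proof. by rewrite card_sig; apply: eq_card => A; rewrite inE. Qed.

Section RjoinDegrees.

Variables (T1 T2 : finType) (e1 : rel T1) (e2 : rel T2).
Hypothesis sg1 : simple_graph e1.

Local Notation G := (Rjoin_adj e1 e2).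

Lemma deg_Rjoin_old (x : T1) : deg G (inl (inl x)) = 2 * deg e1 x.
Proof.
rewrite /deg card_set_sum !big_sumType /= [X in _ + X = _]big1 // addn0.
rewrite -card_set_sum (sum_inserted e1 (fun A => (x \in A : nat))).
by rewrite sum_edges_mem // mul2n addnn.
Qed.

Lemma deg_Rjoin_inserted (a : inserted e1) : deg G (inl (inr a)) = #|T2| + 2.
Proof.
rewrite /deg card_set_sum !big_sumType /= [X in _ + X + _ = _]big1 // addn0.
rewrite -card_set_sum sum_nat_const muln1 addnC.
rewrite (_ : [set w | w \in val a] = val a); last by apply/setP => w; rewrite inE.
by rewrite (card_edge sg1 (valP a)); congr (_ + _); apply: eq_card.
Qed.

Lemma deg_Rjoin_new (z : T2) : deg G (inr z) = #|edges e1| + deg e2 z.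
Proof.
rewrite /deg card_set_sum !big_sumType /= [X in X + _ + _ = _]big1 // add0n.
rewrite -card_set_sum sum_nat_const muln1 -card_inserted.
by congr (_ + _); apply: eq_card.
Qed.

Lemma Findex_Rjoin :
  Findex G = 8 * Findex e1 + #|edges e1| * (#|T2| + 2) ^ 3
             + \sum_z (#|edges e1| + deg e2 z) ^ 3.
Proof.
rewrite /Findex !big_sumType /= big_distrr /=.
congr (_ + _ + _).
- by apply: eq_bigr => x _; rewrite deg_Rjoin_old expnMn.
- rewrite -card_inserted -sum_nat_const.
  by apply: eq_bigr => a _; rewrite deg_Rjoin_inserted.
- by apply: eq_bigr => z _; rewrite deg_Rjoin_new.
Qed.

End RjoinDegrees.

Theorem theorem4 (T1 T2 : finType) (e1 : rel T1) (e2 : rel T2) :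
  simple_graph e1 -> simple_graph e2 ->
  connected_graph e1 -> connected_graph e2 ->
  let n2 := #|T2| in
  let m1 := #|edges e1| in
  let m2 := #|edges e2| in
  Findex (Rjoin_adj e1 e2) =
    8 * Findex e1 + Findex e2 + 3 * m1 * M1 e2 + 6 * m1 ^ 2 * m2
    + m1 * (n2 + 2) ^ 3 + n2 * m1 ^ 3.
Proof.
move=> sg1 sg2 _ _ n2 m1 m2.
rewrite Findex_Rjoin //.
under eq_bigr => z _ do rewrite expn3D.
rewrite !big_split /= sum_nat_const (eq_card (B := T2)) // -/n2.
rewrite -!big_distrr /= handshake // /Findex /M1 -/m1 -/m2.
lia.
Qed.
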